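(* Let $\mathcal T,\mathcal S$ be sets, $N\ge1$ an integer, $0<\delta<1\le M$, and $\tau:\mathcal T\to(0,M]$, $\sigma:\mathcal S\to(0,M]$ functions. (1) Suppose that for all integers $k\ge N$ and $\ell\ge1$, $$\#\tau^{-1}([\delta^{k+\ell},\delta^k))\le\#\sigma^{-1}([\delta^{k+\ell+1},\delta^{k-1}))\quad\text{and}\quad \#\sigma^{-1}([\delta^{k+\ell},\delta^k))\le\#\tau^{-1}([\delta^{k+\ell+1},\delta^{k-1})).$$ Then there is $\delta'>0$ such that one of the following holds: (i) there is a bijection $\eta:\mathcal T\to\mathcal S$ with $\delta'\le \tau(t)/\sigma(\eta(t))\le 1/\delta'$ for all $t\in\mathcal T$; (ii) for some set $\mathcal I$ (disjoint from $\mathcal T$), extending $\tau$ to $\mathcal T\cup\mathcal I$ by $\tau(t)=1$ for $t\in\mathcal I$, there is a bijection $\eta:\mathcal T\cup\mathcal I\to\mathcal S$ with $\delta'\le \tau(t)/\sigma(\eta(t))\le 1/\delta'$ for all $t\in\mathcal T\cup\mathcal I$; (iii) for some set $\mathcal I$ (disjoint from $\mathcal S$), extending $\sigma$ to $\mathcal S\cup\mathcal I$ by $\sigma(s)=1$ for $s\in\mathcal I$, there is a bijection $\eta:\mathcal T\to\mathcal S\cup\mathcal I$ with $\delta'\le \tau(t)/\sigma(\eta(t))\le 1/\delta'$ for all $t\in\mathcal T$. (2) If the two displayed inequalities hold for all integers $k\in\mathbb Z$ (and all $\ell\ge1$), then alternative (i) holds for some $\delta'>0$.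
   Context: $\#$ denotes cardinality (possibly infinite). *)

From HB Require Import structures.
From mathcomp Require Import all_boot all_order all_algebra.
From mathcomp Require Import all_classical all_reals.
Set Implicit Arguments. Unset Strict Implicit. Unset Printing Implicit Defensive.
Import Order.TTheory GRing.Theory Num.Theory.
Local Open Scope classical_set_scope.
Local Open Scope ring_scope.

Definition preIco (R : realType) (X : Type) (f : X -> R) (a b : R) : set X :=
  [set x | a <= f x < b].

Definition count_hyp (R : realType) (T S : Type) (delta : R)
    (tau : T -> R) (sigma : S -> R) (k : int) (l : nat) : Prop :=
  card_le (preIco tau (delta ^ (k + l%:Z)) (delta ^ k))
          (preIco sigma (delta ^ (k + l%:Z + 1)) (delta ^ (k - 1)))
  /\
  card_le (preIco sigma (delta ^ (k + l%:Z)) (delta ^ k))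
          (preIco tau (delta ^ (k + l%:Z + 1)) (delta ^ (k - 1))).

Definition comparable_by (R : realType) (d' a b : R) : Prop :=
  d' <= a / b <= d'^-1.

Definition ext1 (R : realType) (X I : Type) (f : X -> R) (x : X + I) : R :=
  match x with inl y => f y | inr _ => 1 end.

From HB Require Import structures.
From mathcomp Require Import all_boot all_order all_algebra finmap zify.
From mathcomp Require Import all_classical all_reals exp.
Import Order.TTheory GRing.Theory Num.Theory.
Set Implicit Arguments. Unset Strict Implicit. Unset Printing Implicit Defensive.
Local Open Scope classical_set_scope.

(* Sort the values into levels, [x] having level [j] when
   [delta ^ j <= x < delta ^ (j - 1)]. The hypothesis says that the elements of
   [T] with levels in a window [[a, b]] are no more numerous than the elements of
   [S] with levels in [[a - 1, b + 1]], and conversely. A Hall-type argument turns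
   this into an injection [T -> S] that changes levels by at most one: an infinite
   level absorbs a copy of [nat] times everything near it, and in between the
   windows are finite and are matched greedily by increasing level. The
   Schroeder-Bernstein construction applied to this injection and to the one from
   [S] to [T] matches, one level apart, two sets containing every element of level
   above [N]; such pairs have ratio between [delta ^ 2] and its inverse. What is
   left has values in [[delta ^+ N, M]] and is matched arbitrarily, after padding
   the smaller side with dummy elements of value [1] (cardinals are comparable).
   When the hypothesis holds at every level nothing is left over. *)

(** * Injections and cardinals *)

Definition inj_on {T U} (A : set T) (f : T -> U) :=
  forall x y, A x -> A y -> f x = f y -> x = y.

Lemma choice_on T U (u0 : U) (A : set T) (G : T -> U -> Prop) :
  (forall a, A a -> exists b, G a b) -> exists h : T -> U, forall a, A a -> G a (h a).
Proof.
move=> AG; have /boolp.choice[h hG] : forall a, exists b, A a -> G a b.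
  move=> a; have [/AG[b Gab]|nAa] := pselect (A a); first by exists b.
  by exists u0 => /nAa.
by exists h.
Qed.

Lemma bigcup_chain2 U (F : set (set U)) x y : total_on F subset ->
  (\bigcup_(X in F) X) x -> (\bigcup_(X in F) X) y -> exists2 X, F X & X x /\ X y.
Proof.
move=> Ftot [X FX Xx] [Y FY Yy]; have [XY|YX] := Ftot _ _ FX FY.
- by exists Y => //; split => //; exact: XY.
- by exists X => //; split => //; exact: YX.
Qed.

Section InjDichotomy.
Variables (T S : Type) (P : set T) (Q : set S).

Definition partial_matching (G : set (T * S)) :=
  [/\ forall a b, G (a, b) -> P a /\ Q b,
      forall a b b', G (a, b) -> G (a, b') -> b = b' &
      forall a a' b, G (a, b) -> G (a', b) -> a = a'].

Lemma partial_matching_bigcup (F : set (set (T * S))) :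
  F `<=` partial_matching -> total_on F subset ->
  partial_matching (\bigcup_(G in F) G).
Proof.
move=> FP Ftot; split.
- by move=> a b [G /FP[GPQ _ _] /GPQ].
- move=> a b b' Gab Gab'.
  by have [G /FP[_ Gf _] [Gab1 Gab1']] := bigcup_chain2 Ftot Gab Gab'; apply: Gf Gab1'.
- move=> a a' b Gab Ga'b.
  by have [G /FP[_ _ Gi] [Gab1 Ga'b1]] := bigcup_chain2 Ftot Gab Ga'b; apply: Gi Ga'b1.
Qed.

Lemma partial_matching_setU1 G a b : partial_matching G -> P a -> Q b ->
  ~ (exists b', G (a, b')) -> ~ (exists a', G (a', b)) ->
  partial_matching (G `|` [set (a, b)]).
Proof.
move=> [GPQ Gf Gi] Pa Qb na nb; split.
- by move=> x y [/GPQ//|/pair_equal_spec[-> ->]].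
- move=> x y y' [Gxy|/pair_equal_spec[-> ->]] [Gxy'|/pair_equal_spec[ex ->]] //.
  + exact: Gf Gxy Gxy'.
  + by case: na; exists y; rewrite -ex.
  + by case: na; exists y'.
- move=> x x' y [Gxy|/pair_equal_spec[-> ->]] [Gx'y|/pair_equal_spec[-> ey]] //.
  + exact: Gi Gxy Gx'y.
  + by case: nb; exists x; rewrite -ey.
  + by case: nb; exists x'.
Qed.

Lemma inj_on_dichotomy (t0 : T) (s0 : S) :
  (exists h : T -> S, inj_on P h /\ set_fun P Q h) \/
  (exists h : S -> T, inj_on Q h /\ set_fun Q P h).
Proof.
have [G [[GPQ Gf Gi] Gmax]] := Zorn_bigcup partial_matching_bigcup.
have [domP|] := pselect (forall a, P a -> exists b, G (a, b)).
  left; have [h hG] := choice_on s0 domP; exists h; split.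
  - by move=> x y Px Py hxy; apply: (Gi _ _ (h x)); [exact: hG|rewrite hxy; exact: hG].
  - by move=> x /hG /GPQ[].
have [ranQ|] := pselect (forall b, Q b -> exists a, G (a, b)).
  right; have [h hG] := choice_on t0 ranQ; exists h; split.
  - by move=> x y Qx Qy hxy; apply: (Gf (h x)); [exact: hG|rewrite hxy; exact: hG].
  - by move=> x /hG /GPQ[].
move=> /existsNP[b /not_implyP[Qb nb]] /existsNP[a /not_implyP[Pa na]].
exfalso; apply: (Gmax (G `|` [set (a, b)])); last exact: partial_matching_setU1.
split=> [p Gp|]; first by left.
by move=> /(_ (a, b) (or_intror erefl)) Gab; apply: na; exists b.
Qed.

End InjDichotomy.

Local Open Scope card_scope.

Lemma card_le_inj_on T U (A : set T) (B : set U) (u0 : U) :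
  A #<= B -> exists f : T -> U, inj_on A f /\ set_fun A B f.
Proof.
move/card_leP => [g].
pose f x := if pselect (A x) is left Ax then set_val (g (SigSub (mem_set Ax))) else u0.
exists f; split.
- move=> x y Ax Ay; rewrite /f; case: pselect => // Ax'; case: pselect => // Ay'.
  rewrite !set_valE => /val_inj /(@inj _ _ _ g _ _ (in_setT _) (in_setT _)).
  by case.
- by move=> x Ax; rewrite /f; case: pselect => // Ax'; exact: set_valP.
Qed.

Lemma inj_on_card_le T U (A : set T) (B : set U) (f : T -> U) :
  inj_on A f -> set_fun A B f -> A #<= B.
Proof.
move=> fi fAB; have : $|{injfun A >-> B}|.
  apply/injfunPex; exists f; first by move=> x; apply: fAB.
  by move=> x y /set_mem Ax /set_mem Ay; apply: fi.
by case=> g; exact: inj_card_le g.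
Qed.

Definition ncard T (A : set T) : nat := #|` fset_set (A : set {classic T})|.

Lemma ncardP T (A : set T) : finite_set A -> A #= `I_(ncard A).
Proof.
by move=> /finite_setP[n An]; rewrite /ncard (@card_fset_set {classic T} A n An).
Qed.

Lemma ncard0 T : ncard (@set0 T) = 0%N.
Proof. by rewrite /ncard fset_set0 cardfs0. Qed.

Lemma ncardU T (A B : set T) : finite_set A -> finite_set B -> A `&` B = set0 ->
  ncard (A `|` B) = (ncard A + ncard B)%N.
Proof.
move=> fA fB AB; rewrite /ncard (@fset_setU {classic T} A B fA fB).
apply/eqP; rewrite -(eqn_add2r #|` (fset_set (A : set {classic T}) `&`
                                    fset_set (B : set {classic T}))%fset|).
by rewrite cardfsUI -(@fset_setI {classic T} A B) // AB fset_set0 cardfs0 addn0.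
Qed.

Lemma card_le_ncard T U (A : set T) (B : set U) :
  A #<= B -> finite_set B -> (ncard A <= ncard B)%N.
Proof.
move=> AB fB; have [_ IA] := (card_eqPle _ _).1 (ncardP (card_le_finite AB fB)).
have [BI _] := (card_eqPle _ _).1 (ncardP fB).
by rewrite -card_le_II (card_le_trans (card_le_trans IA AB) BI).
Qed.

Lemma ncard_level_window U (P : set U) (lv : U -> nat) a b :
  (forall m, (a <= m < b)%N -> finite_set [set u | P u /\ lv u = m]) ->
  finite_set [set u | P u /\ (a <= lv u < b)%N] /\
  ncard [set u | P u /\ (a <= lv u < b)%N] =
    (\sum_(a <= m < b) ncard [set u | P u /\ lv u = m])%N.
Proof.
elim: b => [|b IH] fin.
  have -> : [set u | P u /\ (a <= lv u < 0)%N] = set0.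
    by apply/seteqP; split => u //= [_ /andP[]].
  by rewrite big_geq // ncard0; split => //; exact: finite_set0.
have [ab|ba] := leqP a b; last first.
  have -> : [set u | P u /\ (a <= lv u < b.+1)%N] = set0.
    by apply/seteqP; split => u //= [_ /andP[]]; lia.
  by rewrite big_geq // ncard0; split => //; exact: finite_set0.
have /IH[fw cw] : forall m, (a <= m < b)%N -> finite_set [set u | P u /\ lv u = m].
  by move=> m hm; apply: fin; lia.
have fb : finite_set [set u | P u /\ lv u = b] by apply: fin; lia.
have -> : [set u | P u /\ (a <= lv u < b.+1)%N] =
   [set u | P u /\ (a <= lv u < b)%N] `|` [set u | P u /\ lv u = b].
  apply/seteqP; split => u /=.
  - by move=> [Pu ab1]; have [e|ne] := eqVneq (lv u) b; [right|left]; split => //; lia.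
  - by move=> [[Pu ab1]|[Pu e]]; split => //; lia.
split; first by rewrite finite_setU.
rewrite ncardU // ?big_nat_recr //= ?cw //.
by apply/seteqP; split => u //= [[_ h] [_ e]]; move: h; rewrite e ltnn andbF.
Qed.

Lemma infinite_set_nat_inj Y (A : set Y) : infinite_set A ->
  exists c : nat -> Y, injective c /\ forall n, A (c n).
Proof.
move=> iA; have [y0 _] := infinite_setN0 iA.
have [c [ci cA]] := card_le_inj_on y0 (proj1 (infiniteP _) iA).
by exists c; split => [m n|n]; [exact: ci|exact: cA].
Qed.

Lemma finite_set_inj_nat Y (A : set Y) : finite_set A -> exists e : Y -> nat, inj_on A e.
Proof.
move=> fA; have [AI _] := (card_eqPle _ _).1 (ncardP fA).
by have [e [ei _]] := card_le_inj_on 0%N AI; exists e.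
Qed.

(** * Infinite sets absorb a copy of nat *)

Section Absorb.
Variables (Y : Type) (A : set Y).

Definition gdom (G : set ((Y * nat) * Y)) := [set y | exists n z, G ((y, n), z)].

(* [G] is the graph of an injection [gdom G * nat -> gdom G], where [gdom G]
   is contained in [A]. *)
Definition absorbing (G : set ((Y * nat) * Y)) :=
  [/\ forall y n z, G ((y, n), z) -> [/\ A y, A z & gdom G z],
      forall p z z', G (p, z) -> G (p, z') -> z = z',
      forall p p' z, G (p, z) -> G (p', z) -> p = p' &
      forall y n, gdom G y -> exists z, G ((y, n), z)].

Lemma absorbing_bigcup (F : set (set ((Y * nat) * Y))) :
  F `<=` absorbing -> total_on F subset -> absorbing (\bigcup_(G in F) G).
Proof.
move=> FA Ftot; split.
- move=> y n z [G FG Gz]; have [G1 _ _ _] := FA G FG.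
  have [Ay Az [m [w Gw]]] := G1 _ _ _ Gz.
  by split => //; exists m, w, G.
- move=> p z z' Gz Gz'.
  by have [G /FA[_ Gf _ _] [Gz1 Gz1']] := bigcup_chain2 Ftot Gz Gz'; apply: Gf Gz1'.
- move=> p p' z Gp Gp'.
  by have [G /FA[_ _ Gi _] [Gp1 Gp1']] := bigcup_chain2 Ftot Gp Gp'; apply: Gi Gp1'.
- move=> y n [m [z [G FG Gz]]]; have [_ _ _ Gt] := FA G FG.
  by have [w Gw] := Gt y n (ex_intro _ m (ex_intro _ z Gz)); exists w, G.
Qed.

Section Extend.
Variables (G : set ((Y * nat) * Y)) (c : nat -> Y).
Hypotheses (absG : absorbing G) (c_inj : injective c)
  (cA : forall i, A (c i)) (c_new : forall i, ~ gdom G (c i)).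

Definition fresh_edges : set ((Y * nat) * Y) :=
  [set p | exists i n : nat, p = ((c i, n), c (choice.pickle (i, n)))].

Lemma absorbing_fresh : absorbing (G `|` fresh_edges).
Proof.
have [G1 G2 G3 G4] := absG.
have dom_fresh i : gdom (G `|` fresh_edges) (c i).
  by exists 0%N, (c (choice.pickle (i, 0%N))); right; exists i, 0%N.
split.
- move=> y n z [Gz|[i [m [= -> _ ->]]]]; last by [].
  by have [Ay Az [m [w Gw]]] := G1 _ _ _ Gz; split => //; exists m, w; left.
- move=> p z z' [Gz|[i [m /pair_equal_spec[-> ->]]]]
                [Gz'|[i' [m' /pair_equal_spec[e ->]]]].
  + exact: G2 Gz Gz'.
  + by exfalso; apply: (@c_new i'); exists m', z; rewrite -e.
  + by exfalso; apply: (@c_new i); exists m, z'.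
  + by move/pair_equal_spec: e => [/c_inj -> ->].
- move=> [y n] [y' n'] z [Gz|[i [m /pair_equal_spec[-> ->]]]]
                        [Gz'|[i' [m' /pair_equal_spec[-> e]]]].
  + exact: G3 Gz Gz'.
  + by have [_ _] := G1 _ _ _ Gz; rewrite e => /c_new.
  + by have [_ _ /c_new] := G1 _ _ _ Gz'.
  + by move: e => /c_inj/(pcan_inj (@choice.pickleK _))/pair_equal_spec[-> ->].
- move=> y n [m [z [Gz|[i [k [= -> _ _]]]]]].
    by have [w Gw] := G4 y n (ex_intro _ m (ex_intro _ z Gz)); exists w; left.
  by exists (c (choice.pickle (i, n))); right; exists i, n.
Qed.

Lemma proper_fresh : G `<` G `|` fresh_edges.
Proof.
split=> [p Gp|]; first by left.
move=> /(_ ((c 0, 0), c (choice.pickle (0, 0)))%N) Gc; apply: (@c_new 0).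
by exists 0%N, (c (choice.pickle (0, 0)%N)); apply: Gc; right; exists 0%N, 0%N.
Qed.

End Extend.

Lemma maximal_absorbing_cofinite G : absorbing G ->
  (forall G', G `<` G' -> ~ absorbing G') -> finite_set (A `\` gdom G).
Proof.
move=> absG Gmax; apply: contrapT => /infinite_set_nat_inj[c [c_inj cF]].
have c_new i : ~ gdom G (c i) by have [] := cF i.
apply: (Gmax (G `|` fresh_edges c)); first exact: proper_fresh.
by apply: absorbing_fresh => // i; have [] := cF i.
Qed.

Lemma infinite_absorbs_nat : infinite_set A ->
  exists psi : Y -> nat -> Y, (forall y n, A y -> A (psi y n)) /\
    (forall y n y' n', A y -> A y' -> psi y n = psi y' n' -> y = y' /\ n = n').
Proof.
move=> iA; have [y0 _] := infinite_setN0 iA.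
have [G [absG Gmax]] := Zorn_bigcup absorbing_bigcup.
have [G1 _ G3 G4] := absG.
have fin_rest := maximal_absorbing_cofinite absG Gmax.
have /infinite_set_nat_inj[d [d_inj dD]] : infinite_set (gdom G).
  move=> finD; apply: iA.
  have : finite_set (gdom G `|` (A `\` gdom G)) by rewrite finite_setU.
  by apply: sub_finite_set => y Ay; have [|] := pselect (gdom G y); [left|right].
have [e e_inj] := finite_set_inj_nat fin_rest.
(* Points of [gdom G] use the even slots, the finitely many others are sent to
   the odd slots of distinct points of [gdom G]. *)
pose key y n := if pselect (gdom G y) then (y, n.*2) else (d (e y), n.*2.+1).
have keyD y n : gdom G (key y n).1 by rewrite /key; destruct (pselect (gdom G y)); last exact: dD.
have key_inj y n y' n' : A y -> A y' -> key y n = key y' n' -> y = y' /\ n = n'.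
  rewrite /key => Ay Ay'.
  destruct (pselect (gdom G y)) as [Dy|Dy]; destruct (pselect (gdom G y')) as [Dy'|Dy'] => /=.
  - by move=> /pair_equal_spec[-> /double_inj ->].
  - by move=> /pair_equal_spec[_ /(congr1 odd)]; rewrite /= !odd_double.
  - by move=> /pair_equal_spec[_ /(congr1 odd)]; rewrite /= !odd_double.
  move=> /pair_equal_spec[/d_inj/(e_inj _ _ (conj Ay Dy) (conj Ay' Dy')) ->].
  by move=> /eq_add_S/double_inj ->.
have [h hG] : exists h : Y * nat -> Y, forall p, gdom G p.1 -> G (p, h p).
  apply: (choice_on y0 (A := fun p => gdom G p.1) (G := fun p z => G (p, z))).
  by move=> [y n]; exact: G4.
exists (fun y n => h (key y n)); split.
- move=> y n _; have := hG _ (keyD y n).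
  by case: (key y n) => y1 n1 /G1[].
- move=> y n y' n' Ay Ay' E; apply: key_inj => //.
  by apply: (G3 _ _ (h (key y n))); [exact: hG|rewrite E; exact: hG].
Qed.

End Absorb.

(** * Injections between levels *)

Section IntervalMatching.
Variables (T S : Type) (A : set T) (B : set S) (lt : T -> nat) (ls : S -> nat)
  (x y : nat -> nat) (idx : T -> nat) (el : nat -> nat -> S).
Hypotheses
  (idx_inj : forall t t', A t -> A t' -> lt t = lt t' -> idx t = idx t' -> t = t')
  (idx_lt : forall t, A t -> idx t < x (lt t))
  (elP : forall m i, i < y m -> B (el m i) /\ ls (el m i) = m)
  (el_inj : forall m i i', i < y m -> i' < y m -> el m i = el m i' -> i = i')
  (window_le : forall c d, \sum_(c <= j < d.+1) x j <= \sum_(c.-1 <= m < d.+2) y m).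

(* Greedy matching: the elements of [B] of level [m] occupy the positions
   [ysum m <= q < ysum m.+1]; those of [A] of level [j] take consecutive positions
   from [xstart j], the first one free after level [j.-1] and not below the
   block of level [j.-1] of [B]. *)
Let ysum m := \sum_(0 <= i < m) y i.

Fixpoint xstart j := if j is j'.+1 then maxn (xstart j' + x j') (ysum j') else 0.

Lemma ysumS m : ysum m.+1 = ysum m + y m.
Proof. by rewrite /ysum big_nat_recr. Qed.

Lemma leq_ysum m m' : m <= m' -> ysum m <= ysum m'.
Proof.
elim: m' => [|m' IH]; first by rewrite leqn0 => /eqP->.
by rewrite leq_eqVlt => /orP[/eqP->//|]; rewrite ltnS => /IH; rewrite ysumS; lia.
Qed.

Lemma xstart_sum j : exists2 c, c <= j &
  xstart j + x j = ysum c.-1 + \sum_(c <= i < j.+1) x i.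
Proof.
elim: j => [|j [c cj IH]]; first by exists 0 => //; rewrite big_nat1 /ysum big_geq.
rewrite /= /maxn; case: ltnP => H.
- by exists j.+1 => //; rewrite big_nat1 /=; lia.
- by exists c; [lia|rewrite big_nat_recr /=; lia].
Qed.

Lemma xstart_ub j : xstart j + x j <= ysum j.+2.
Proof.
have [c cj ->] := xstart_sum j; have := window_le c j.
by rewrite /ysum (@big_cat_nat _ _ _ c.-1 0 j.+2) //=; lia.
Qed.

Lemma xstart_lb j : ysum j.-1 <= xstart j.
Proof. by case: j => [|j] /=; [rewrite /ysum big_geq|lia]. Qed.

Lemma xstart_mono j j' : j < j' -> xstart j + x j <= xstart j'.
Proof.
elim: j' => // j' IH; rewrite ltnS leq_eqVlt => /orP[/eqP->/=|/IH /=]; lia.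
Qed.

Definition slot_level q :=
  if pselect (exists m, q < ysum m.+1) is left h then ex_minn h else 0.

Lemma slot_levelP q K : q < ysum K ->
  [/\ ysum (slot_level q) <= q, q < ysum (slot_level q).+1 &
      forall m, q < ysum m.+1 -> slot_level q <= m].
Proof.
move=> qK; have ex : exists m, q < ysum m.+1.
  by exists K; apply: leq_trans qK (leq_ysum (leqnSn K)).
rewrite /slot_level; case: pselect => // h; case: ex_minnP => m Hm mmin; split => //.
case: m Hm mmin => [|m] Hm mmin; first by rewrite /ysum big_geq.
by rewrite leqNgt; apply/negP => /mmin; rewrite ltnn.
Qed.

Let pos t := xstart (lt t) + idx t.
Let lev t := slot_level (pos t).

Lemma pos_slot t : A t ->
  [/\ ysum (lev t) <= pos t, pos t < ysum (lev t) + y (lev t),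
      lev t <= (lt t).+1 & (lt t).-1 <= lev t].
Proof.
move=> At; rewrite /lev; have qb : pos t < ysum (lt t).+2.
  by have := idx_lt At; have := xstart_ub (lt t); rewrite /pos; lia.
have [H1 H2 H3] := slot_levelP qb; rewrite -ysumS; split => //; first exact: H3.
rewrite leqNgt; apply/negP => H.
have : ysum (slot_level (pos t)).+1 <= ysum (lt t).-1 by apply: leq_ysum.
by have := xstart_lb (lt t); rewrite /pos in H2 *; lia.
Qed.

Lemma interval_matching : exists f : T -> S, inj_on A f /\ set_fun A B f /\
  (forall t, A t -> lt t <= (ls (f t)).+1 /\ ls (f t) <= (lt t).+1).
Proof.
pose f t := el (lev t) (pos t - ysum (lev t)).
have fP t : A t -> B (f t) /\ ls (f t) = lev t.
  by move=> At; have [? ? _ _] := pos_slot At; apply: elP; lia.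
exists f; split; [|split].
- move=> t t' At At' E.
  have [a1 a2 _ _] := pos_slot At; have [b1 b2 _ _] := pos_slot At'.
  have Elev : lev t = lev t' by rewrite -(fP t At).2 E (fP t' At').2.
  rewrite /f Elev in E a1 a2.
  have e : pos t - ysum (lev t') = pos t' - ysum (lev t') by apply: el_inj E; lia.
  have Epos : pos t = pos t' by lia.
  rewrite /pos in Epos; have [lt_ll|gt_ll|eq_ll] := ltngtP (lt t) (lt t').
  + by have := xstart_mono lt_ll; have := idx_lt At; lia.
  + by have := xstart_mono gt_ll; have := idx_lt At'; lia.
  + by apply: idx_inj => //; rewrite eq_ll in Epos; lia.
- by move=> t /fP[].
- by move=> t At; rewrite (fP t At).2; have [_ _ ? ?] := pos_slot At; lia.
Qed.

End IntervalMatching.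

Section WindowSum.
Variables (inf : nat -> Prop) (x y : nat -> nat).
Let near j := exists m, (j.-1 <= m <= j.+1)%N /\ inf m.
Hypotheses (x_near : forall j, near j -> x j = 0%N) (y_inf : forall m, inf m -> y m = 0%N)
  (window_far : forall c e, (c < e)%N -> (forall j, (c <= j < e)%N -> ~ near j) ->
     (\sum_(c <= j < e) x j <= \sum_(c.-1 <= m < e.+1) y m)%N).

(* Cut the window at a level [m] with [inf m], or trim an end [j] with [near j];
   both contribute nothing to the sums. *)
Lemma window_sum_le c e : (\sum_(c <= j < e) x j <= \sum_(c.-1 <= m < e.+1) y m)%N.
Proof.
move: {2}(e - c)%N (leqnn (e - c)%N) => n; elim: n c e => [|n IH] c e hn.
  by rewrite big_geq //; lia.
have [ec|ce] := leqP e c; first by rewrite big_geq.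
have [[m [/andP[cm me] im]]|noinf] := pselect (exists m, (c <= m < e)%N /\ inf m).
  rewrite (@big_cat_nat _ _ _ m) //=; last by lia.
  rewrite (@big_ltn _ _ _ m e _ me) x_near; last by exists m; split => //; lia.
  rewrite (@big_cat_nat _ _ _ m.+1 c.-1 e.+1) /=; [|lia|lia].
  have h1 := IH c m ltac:(lia); have h2 := IH m.+1 e ltac:(lia).
  by move: h2; rewrite /= (@big_ltn _ _ _ m e.+1) ?y_inf //; lia.
have [nc|nnc] := pselect (near c).
  rewrite (@big_ltn _ _ _ c e _ ce) x_near // add0n.
  have /= h := IH c.+1 e ltac:(lia).
  by rewrite (@big_cat_nat _ _ _ c c.-1 e.+1) /=; lia.
have [ne|nne] := pselect (near e.-1).
  have ce1 : (c <= e.-1)%N by lia.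
  have e1e : (e.-1 < e)%N by lia.
  rewrite (@big_cat_nat _ _ _ e.-1 c e _ _ ce1 (ltnW e1e)) /=.
  have ee1 : (e <= e.-1.+1)%N by lia.
  rewrite (@big_ltn _ _ _ e.-1 e _ e1e) x_near // (big_geq ee1) !addn0.
  have h := IH c e.-1 ltac:(lia); rewrite prednK in h; last by lia.
  by rewrite (@big_cat_nat _ _ _ e c.-1 e.+1) /=; lia.
apply: window_far => // j /andP[cj je] [m [/andP[h1 h2] im]].
have [cm|mc] := leqP c m.
  have [me|em] := ltnP m e; first by apply: noinf; exists m; rewrite cm me.
  by apply: nne; exists m; split => //; apply/andP; split; lia.
by apply: nnc; exists m; split => //; apply/andP; split; lia.
Qed.

End WindowSum.


Section LevelInjection.
Variables (T S : Type) (s0 : S) (A : set T) (lt : T -> nat) (ls : S -> nat).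
Hypothesis window_le : forall a b,
  [set t | A t /\ (a <= lt t <= b)%N] #<= [set s | (a.-1 <= ls s <= b.+1)%N].

Definition tlevel j := [set t | A t /\ lt t = j].
(* The dummy [setT s] lets [ncard_level_window] apply with [P := setT]. *)
Definition slevel m := [set s : S | setT s /\ ls s = m].
Definition inf_level m := infinite_set (slevel m).
Definition near_inf j := exists m, (j.-1 <= m <= j.+1)%N /\ inf_level m.

Lemma tlevel_card_le j : tlevel j #<= [set s : S | setT s /\ (j.-1 <= ls s < j.+2)%N].
Proof.
apply: card_le_trans (card_le_trans (window_le j j) _).
  by apply: subset_card_le => t [At <-]; split => //; rewrite leqnn.
by apply: subset_card_le => s /= h; split.
Qed.

Lemma finite_slevel m : ~ inf_level m -> finite_set (slevel m).
Proof. by move=> h; apply: contrapT. Qed.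

Lemma finite_tlevel j : ~ near_inf j -> finite_set (tlevel j).
Proof.
move=> nj; apply: card_le_finite (tlevel_card_le j) _.
have [|//] := @ncard_level_window S setT ls j.-1 j.+2; move=> m /andP[h1 h2].
by apply: finite_slevel => im; apply: nj; exists m; split => //; lia.
Qed.

(* Levels near an infinite level are handled separately, so they are not counted. *)
Definition tcount j := if pselect (near_inf j) then 0%N else ncard (tlevel j).
Definition scount m := if pselect (inf_level m) then 0%N else ncard (slevel m).

Lemma window_count_le c d :
  (\sum_(c <= j < d.+1) tcount j <= \sum_(c.-1 <= m < d.+2) scount m)%N.
Proof.
apply: (@window_sum_le inf_level) => [j nj|m im|{}c e ce far].
- by rewrite /tcount; case: pselect.
- by rewrite /scount; case: pselect.
have [fX cX] := @ncard_level_window T A lt c e (fun j hj => finite_tlevel (far j hj)).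
have fin_s m : (c.-1 <= m < e.+1)%N -> ~ inf_level m.
  move=> /andP[h1 h2] im; have [j cje mj] : exists2 j, (c <= j < e)%N & (j.-1 <= m <= j.+1)%N.
    by exists (minn (maxn m c) e.-1); lia.
  exact: (far j cje (ex_intro _ m (conj mj im))).
have [fY cY] := @ncard_level_window S setT ls c.-1 e.+1 (fun m hm => finite_slevel (fin_s m hm)).
have -> : (\sum_(c <= j < e) tcount j = \sum_(c <= j < e) ncard (tlevel j))%N.
  by apply: eq_big_nat => j hj; rewrite /tcount; case: pselect => [/(far j hj) []|].
have -> : (\sum_(c.-1 <= m < e.+1) scount m = \sum_(c.-1 <= m < e.+1) ncard (slevel m))%N.
  by apply: eq_big_nat => m hm; rewrite /scount; case: pselect => [/(fin_s m hm) []|].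
rewrite -cX -cY; apply: card_le_ncard fY.
apply: card_le_trans (card_le_trans (window_le c e.-1) _).
  by apply: subset_card_le => t [At /andP[h1 h2]]; split => //; apply/andP; split; lia.
by apply: subset_card_le => s /= /andP[h1 h2]; split => //; apply/andP; split; lia.
Qed.

Definition tfar := [set t | A t /\ ~ near_inf (lt t)].
Definition sfin := [set s : S | ~ inf_level (ls s)].

Lemma far_matching : exists f : T -> S, inj_on tfar f /\ set_fun tfar sfin f /\
  (forall t, tfar t -> (lt t <= (ls (f t)).+1)%N /\ (ls (f t) <= (lt t).+1)%N).
Proof.
have /boolp.choice [E HE] : forall j, exists e : T -> nat,
    ~ near_inf j -> inj_on (tlevel j) e /\ set_fun (tlevel j) `I_(ncard (tlevel j)) e.
  move=> j; have [nj|nj] := pselect (near_inf j); first by exists (fun _ => 0%N).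
  have [h _] := (card_eqPle _ _).1 (ncardP (finite_tlevel nj)).
  by have [e ?] := card_le_inj_on 0%N h; exists e.
have /boolp.choice [G HG] : forall m, exists g : nat -> S,
    ~ inf_level m -> inj_on `I_(ncard (slevel m)) g /\
                     set_fun `I_(ncard (slevel m)) (slevel m) g.
  move=> m; have [im|im] := pselect (inf_level m); first by exists (fun _ => s0).
  have [_ h] := (card_eqPle _ _).1 (ncardP (finite_slevel im)).
  by have [g ?] := card_le_inj_on s0 h; exists g.
apply: (@interval_matching T S tfar sfin lt ls tcount scount (fun t => E (lt t) t) G).
- move=> t t' [At nt] [At' nt'] ll; rewrite -ll => ee.
  by have [ei _] := HE _ nt; apply: ei => //; split.
- move=> t [At nt]; rewrite /tcount; case: pselect => [/nt//|_ /=].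
  by have [_ em] := HE _ nt; apply: em; split.
- move=> m i; rewrite /scount /=; case: pselect => [//|im] hi.
  by have [_ gm] := HG _ im; have [_ e] := gm i hi; split => //; rewrite /sfin /= e.
- move=> m i i'; rewrite /scount /=; case: pselect => [//|im] hi hi'.
  by have [gi _] := HG _ im; apply: gi.
- exact: window_count_le.
Qed.

Lemma finite_sfin_window a b : finite_set [set s | sfin s /\ (a <= ls s < b)%N].
Proof.
have [|//] := @ncard_level_window S sfin ls a b; move=> m _.
have [im|im] := pselect (inf_level m); last first.
  by apply: sub_finite_set (finite_slevel im) => u [_ e].
by apply: sub_finite_set (finite_set0 S) => u [h e]; apply: h; rewrite e.
Qed.

Definition tnear := [set t | A t /\ near_inf (lt t)].

(* [t] of level [j] is coded by a point [b] of an infinite level near [j] and a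
   number. If [phi j t] is on an infinite level, [b := phi j t] and the number
   [j.+1 - ls b < 3] recovers [j]; the finitely many other [t] of level [j] share
   one [b] and get numbers [>= 3] encoding [j.+1 - ls b] and an index of [t]. *)
Lemma near_code : exists code : T -> S * nat, inj_on tnear code /\
  forall t, tnear t -> inf_level (ls (code t).1) /\
    (lt t <= (ls (code t).1).+1)%N /\ (ls (code t).1 <= (lt t).+1)%N.
Proof.
have /boolp.choice [phi Hphi] : forall j, exists p : T -> S,
    inj_on (tlevel j) p /\ set_fun (tlevel j) [set s | (j.-1 <= ls s <= j.+1)%N] p.
  move=> j; apply: card_le_inj_on s0 (card_le_trans _ (window_le j j)).
  by apply: subset_card_le => t [At <-]; split => //; rewrite leqnn.
have /boolp.choice [b Hb] : forall j, exists s, near_inf j ->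
    inf_level (ls s) /\ (j.-1 <= ls s <= j.+1)%N.
  move=> j; have [[m [jm im]]|nj] := pselect (near_inf j); last by exists s0 => /nj.
  by have [s [_ sm]] := infinite_setN0 im; exists s => _; rewrite sm.
pose unmatched j := [set t | tlevel j t /\ ~ inf_level (ls (phi j t))].
have /boolp.choice [e e_inj] : forall j, exists e : T -> nat, inj_on (unmatched j) e.
  move=> j; apply/finite_set_inj_nat/(card_le_finite _ (finite_sfin_window j.-1 j.+2)).
  apply: (@inj_on_card_le _ _ _ _ (phi j)) => [t t' [ht _] [ht' _]|t [ht nt]].
    exact: (Hphi j).1.
  by have /= /andP[h1 h2] := (Hphi j).2 t ht; split; [exact: nt|lia].
pose code t := let j := lt t in
  if pselect (inf_level (ls (phi j t))) then (phi j t, j.+1 - ls (phi j t))%N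
  else (b j, 3 + 3 * e j t + (j.+1 - ls (b j)))%N.
have phiP t : A t -> ((lt t).-1 <= ls (phi (lt t) t) <= (lt t).+1)%N.
  by move=> At; apply: (Hphi (lt t)).2.
exists code; split.
- move=> t t' [At nt] [At' nt']; rewrite /code.
  have /andP[w1 w2] := phiP t At; have /andP[w1' w2'] := phiP t' At'.
  have [_ /andP[b1 b2]] := Hb _ nt; have [_ /andP[b1' b2']] := Hb _ nt'.
  case: pselect => it; case: pselect => it' /= /pair_equal_spec[E K].
  + have ll : lt t' = lt t by move: K w1 w2; rewrite E; lia.
    by apply: (Hphi (lt t)).1 => //; rewrite E ll.
  + by move: K; lia.
  + by move: K; lia.
  + move: K b1 b2; rewrite E => K b1 b2.
    have ll : lt t' = lt t by clear -K b1 b2 b1' b2'; lia.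
    apply: (e_inj (lt t)); [by split|by rewrite -ll; split|].
    by rewrite ll in K; clear -K; lia.
- move=> t [At nt]; rewrite /code; have /andP[w1 w2] := phiP t At.
  case: pselect => it /=; first by split => //; lia.
  by have [? /andP[b1 b2]] := Hb _ nt; split => //; lia.
Qed.

Lemma near_matching : exists f : T -> S, inj_on tnear f /\
  forall t, tnear t -> inf_level (ls (f t)) /\
    (lt t <= (ls (f t)).+1)%N /\ (ls (f t) <= (lt t).+1)%N.
Proof.
have [code [code_inj codeP]] := near_code.
have /boolp.choice [psi Hpsi] : forall m, exists p : S -> nat -> S, inf_level m ->
    (forall s n, slevel m s -> slevel m (p s n)) /\
    (forall s n s' n', slevel m s -> slevel m s' -> p s n = p s' n' -> s = s' /\ n = n').
  move=> m; have [im|nim] := pselect (inf_level m); last by exists (fun _ _ => s0) => /nim.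
  by have [p ?] := infinite_absorbs_nat im; exists p.
pose f t := psi (ls (code t).1) (code t).1 (code t).2.
have ls_f t : tnear t -> ls (f t) = ls (code t).1.
  move=> /codeP[im _]; have [psi_lev _] := Hpsi _ im.
  exact: (psi_lev _ (code t).2 (conj I erefl)).2.
exists f; split => [t t' Nt Nt' E|t Nt]; last by rewrite ls_f //; exact: codeP.
apply: code_inj => //; have [im _] := codeP t Nt.
have [_ psi_inj] := Hpsi _ im.
have /(psi_inj _ _ _ _ (conj I erefl))[|e1 e2] : f t = psi (ls (code t).1) (code t').1 (code t').2.
- by rewrite E /f -(ls_f t' Nt') -E (ls_f t Nt).
- by split => //; rewrite -(ls_f t' Nt') -E (ls_f t Nt).
by case: (code t) (code t') e1 e2 => [? ?] [? ?] /= -> ->.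
Qed.

Lemma level_injection : exists f : T -> S, inj_on A f /\
  (forall t, A t -> (lt t <= (ls (f t)).+1)%N /\ (ls (f t) <= (lt t).+1)%N).
Proof.
have [fF [fF_inj [fF_fin fF_lev]]] := far_matching.
have [fN [fN_inj fN_lev]] := near_matching.
exists (fun t => if pselect (near_inf (lt t)) then fN t else fF t); split.
- move=> t t' At At'; case: pselect => n1; case: pselect => n2 /= E.
  + exact: fN_inj.
  + have [inf_t _] := fN_lev t (conj At n1).
    by exfalso; apply: (fF_fin t' (conj At' n2)); rewrite -E.
  + have [inf_t' _] := fN_lev t' (conj At' n2).
    by exfalso; apply: (fF_fin t (conj At n1)); rewrite E.
  + exact: fF_inj.
- move=> t At; case: pselect => n1.
  + by have [_ ?] := fN_lev t (conj At n1).
  + exact: fF_lev.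
Qed.

End LevelInjection.

(** * From two injections to a bijection *)

Definition pinv T U (t0 : T) (A : set T) (f : T -> U) (u : U) : T :=
  @xget {classic T} t0 [set t | A t /\ f t = u].

Lemma pinvK T U (t0 : T) (A : set T) (f : T -> U) t :
  inj_on A f -> A t -> pinv t0 A f (f t) = t.
Proof.
move=> f_inj At; apply: f_inj => //.
all: by have [] := @xgetI {classic T} t0 [set x | A x /\ f x = f t] t (conj At erefl).
Qed.

Section PartialSchroederBernstein.
Variables (T S : Type) (t0 : T) (s0 : S) (A : set T) (B : set S) (f : T -> S) (g : S -> T).
Hypotheses (f_inj : inj_on A f) (g_inj : inj_on B g).

(* [sb_chain n] holds the points of [A] reached by [n] steps of [g \o f] from the
   points of [A] outside [g @` B]; the bijection follows [f] on their union
   [sb_core] and [g] backwards elsewhere. *)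
Fixpoint sb_chain n : set T :=
  if n is n'.+1 then [set t | exists x, [/\ sb_chain n' x, B (f x), g (f x) = t & A t]]
  else [set t | A t /\ ~ exists s, B s /\ g s = t].

Definition sb_core := [set t | exists n, sb_chain n t].
Definition sb_fcore := [set s | exists2 x, sb_core x & f x = s].

Lemma sb_core_sub : sb_core `<=` A.
Proof. by move=> t [[|n] /=]; [case|move=> [x []]]. Qed.

Lemma sb_core_g s : B s -> sb_core (g s) -> sb_fcore s.
Proof.
move=> Bs [[|n] /=]; first by move=> [_ []]; exists s.
move=> [x [Cx Bfx e _]]; exists x; first by exists n.
exact: g_inj _ _ Bfx Bs e.
Qed.

Lemma sb_core_gf x : sb_core x -> B (f x) -> A (g (f x)) -> sb_core (g (f x)).
Proof. by move=> [n Cx] Bfx Agfx; exists n.+1, x. Qed.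

Definition sb_domT := sb_core `|` [set t | exists s, [/\ B s, g s = t, ~ sb_core t & ~ sb_fcore s]].
Definition sb_domS := sb_fcore `|` B.
Definition sb_fun t := if pselect (sb_core t) then f t else pinv s0 B g t.
Definition sb_inv s := if pselect (sb_fcore s) then pinv t0 sb_core f s else g s.

Lemma sb_domT_sub : A `<=` sb_domT.
Proof.
move=> t At; have [Ct|nCt] := pselect (sb_core t); first by left.
have [[s [Bs gs]]|ng] := pselect (exists s, B s /\ g s = t); last first.
  by case: nCt; exists 0%N.
right; exists s; split => // -[x Cx fx]; apply: nCt.
by rewrite -gs -fx; apply: sb_core_gf => //; rewrite ?fx ?gs.
Qed.

Lemma sb_fun_core t : sb_core t -> sb_fun t = f t.
Proof. by rewrite /sb_fun; case: pselect. Qed.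

Lemma sb_fun_ncore t : ~ sb_core t -> sb_fun t = pinv s0 B g t.
Proof. by rewrite /sb_fun; case: pselect. Qed.

Lemma sb_inv_fcore s : sb_fcore s -> sb_inv s = pinv t0 sb_core f s.
Proof. by rewrite /sb_inv; case: pselect. Qed.

Lemma sb_inv_nfcore s : ~ sb_fcore s -> sb_inv s = g s.
Proof. by rewrite /sb_inv; case: pselect. Qed.

Lemma f_inj_core : inj_on sb_core f.
Proof. by move=> x y Cx Cy; apply: f_inj; exact: sb_core_sub. Qed.

Lemma sb_funK t : sb_domT t -> sb_inv (sb_fun t) = t /\ sb_domS (sb_fun t).
Proof.
case=> [Ct|[s [Bs <- nC nfC]]].
  rewrite sb_fun_core // sb_inv_fcore; last by exists t.
  by rewrite pinvK //; [split; [|left; exists t]|exact: f_inj_core].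
by rewrite sb_fun_ncore // pinvK // sb_inv_nfcore //; split => //; right.
Qed.

Lemma sb_invK s : sb_domS s -> sb_fun (sb_inv s) = s /\ sb_domT (sb_inv s).
Proof.
move=> Ds; have [[x Cx <-]|nfC] := pselect (sb_fcore s).
  rewrite sb_inv_fcore; last by exists x.
  by rewrite pinvK //; [rewrite sb_fun_core //; split => //; left|exact: f_inj_core].
case: Ds => [//|Bs]; have nC : ~ sb_core (g s) by move/(sb_core_g Bs).
by rewrite sb_inv_nfcore // sb_fun_ncore // pinvK //; split => //; right; exists s.
Qed.

Lemma sb_fun_edge t : sb_domT t ->
  (A t /\ sb_fun t = f t) \/ (B (sb_fun t) /\ g (sb_fun t) = t).
Proof.
case=> [Ct|[s [Bs <- nC _]]].
  by left; rewrite sb_fun_core //; split => //; exact: sb_core_sub.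
by right; rewrite sb_fun_ncore // pinvK.
Qed.

End PartialSchroederBernstein.

Section ExtendBijection.
Variables (T S : Type) (t0 : T) (DT : set T) (DS : set S) (mm : T -> S) (mm' : S -> T).
Hypotheses (mmK : forall t, DT t -> mm' (mm t) = t /\ DS (mm t))
  (mm'K : forall s, DS s -> mm (mm' s) = s /\ DT (mm' s)).
Variable h : T -> S.
Hypotheses (h_inj : inj_on (~` DT) h) (h_out : set_fun (~` DT) (~` DS) h).

Definition ext_index := {s : S | ~ DS s /\ ~ exists t, ~ DT t /\ h t = s}.

Definition ext_fun (x : T + ext_index) : S :=
  match x with inl t => if pselect (DT t) then mm t else h t | inr i => sval i end.

Definition ext_inv (s : S) : T + ext_index :=
  match pselect (DS s) with
  | left _ => inl (mm' s)
  | right nD => match pselect (exists t, ~ DT t /\ h t = s) with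
      | left _ => inl (pinv t0 (~` DT) h s)
      | right nh => inr (exist _ s (conj nD nh))
      end
  end.

Lemma ext_funK : cancel ext_fun ext_inv.
Proof.
case=> [t|[s [nD nh]]] /=; rewrite /ext_inv.
- case: (pselect (DT t)) => Dt /=.
    by case: pselect => [_|[]]; [rewrite (mmK Dt).1|exact: (mmK Dt).2].
  case: pselect => [/(h_out Dt) []|nD] /=.
  by case: pselect => [_|nh]; [rewrite pinvK|case: nh; exists t].
- case: pselect => [//|nD'] /=; case: pselect => [//|nh'] /=.
  by congr inr; congr exist; exact: Prop_irrelevance.
Qed.

Lemma ext_invK : cancel ext_inv ext_fun.
Proof.
move=> s; rewrite /ext_inv; case: pselect => [Ds|nD] /=.
  by case: pselect => [_ /=|[]]; [exact: (mm'K Ds).1|exact: (mm'K Ds).2].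
case: pselect => [[t [nt <-]]|nh] //=.
by rewrite pinvK //; case: pselect => Dt //=; case: (nt Dt).
Qed.

Lemma ext_fun_bij : bijective ext_fun.
Proof. exact: Bijective ext_funK ext_invK. Qed.

Lemma ext_fun_inl t :
  (DT t /\ ext_fun (inl t) = mm t) \/ (~ DT t /\ ~ DS (ext_fun (inl t))).
Proof. by rewrite /=; case: pselect => Dt; [left|right; split => //; exact: h_out]. Qed.

Lemma ext_fun_inr i : ~ DS (ext_fun (inr i)).
Proof. by case: i => s []. Qed.

End ExtendBijection.

Lemma extend_partial_bijection T S (t0 : T) (s0 : S) (DT : set T) (DS : set S)
    (mm : T -> S) (mm' : S -> T) :
  (forall t, DT t -> mm' (mm t) = t /\ DS (mm t)) ->
  (forall s, DS s -> mm (mm' s) = s /\ DT (mm' s)) ->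
  (exists (I : Type) (eta : T + I -> S), bijective eta /\
     (forall t, (DT t /\ eta (inl t) = mm t) \/ (~ DT t /\ ~ DS (eta (inl t)))) /\
     (forall i, ~ DS (eta (inr i))))
  \/
  (exists (I : Type) (eta : T -> S + I), bijective eta /\
     forall t, match eta t with
               | inl s => (DT t /\ s = mm t) \/ (~ DT t /\ ~ DS s)
               | inr _ => ~ DT t end).
Proof.
move=> mmK mm'K.
have [[h [h_inj h_out]]|[h [h_inj h_out]]] := inj_on_dichotomy (~` DT) (~` DS) t0 s0.
  left; exists (ext_index DT DS h), (ext_fun mm (h:=h)); split.
    exact (ext_fun_bij t0 mmK mm'K h_inj h_out).
  by split; [exact: ext_fun_inl|exact: ext_fun_inr].
right; exists (ext_index DS DT h).
have [g gK Kg] := ext_fun_bij s0 mm'K mmK h_inj h_out.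
exists g; split; first by exists (ext_fun mm' (h:=h)).
move=> t; case E: (g t) => [s|i]; have := congr1 (ext_fun mm' (h:=h)) E; rewrite Kg => ->.
  case: (ext_fun_inl mm' h_out s) => [[Ds ->]|[nDs nD]]; last by right.
  by left; rewrite (mm'K _ Ds).1; split; [exact: (mm'K _ Ds).2|].
exact: ext_fun_inr.
Qed.

Local Open Scope ring_scope.

(** * Levels of real numbers *)

Lemma comparable_by_le (R : realType) (d d' a b : R) :
  0 < d' -> d' <= d -> comparable_by d a b -> comparable_by d' a b.
Proof.
move=> d'0 dd /andP[h1 h2]; apply/andP; split; first exact: le_trans h1.
by apply: le_trans h2 _; rewrite lef_pV2 ?posrE //; exact: lt_le_trans dd.
Qed.

Lemma comparable_by_range (R : realType) (c M a b : R) : 0 < c ->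
  c <= a <= M -> c <= b <= M -> comparable_by (c / M) a b.
Proof.
move=> c0 /andP[ca aM] /andP[cb bM].
have [a0 b0] : 0 < a /\ 0 < b by split; exact: lt_le_trans c0 _.
have M0 : 0 < M by exact: lt_le_trans aM.
apply/andP; split.
- rewrite ler_pdivlMr //; apply: le_trans ca.
  by rewrite mulrAC ler_pdivrMr // ler_pM2l.
- rewrite invf_div ler_pdivrMr // mulrAC ler_pdivlMr //.
  by apply: ler_pM => //; exact: ltW.
Qed.

Section Levels.
Variables (R : realType) (delta : R).
Hypotheses (d0 : 0 < delta) (d1 : delta < 1).

(* [dlevel x] is the unique [j] with [delta ^ j <= x < delta ^ (j - 1)]. *)
Definition dlevel (x : R) : int := Num.ceil (ln x / ln delta).

Lemma ln_delta_lt0 : ln delta < 0.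
Proof. by apply: ln_lt0; rewrite d0 d1. Qed.

Lemma ln_dexpz (j : int) : ln (delta ^ j) = j%:~R * ln delta.
Proof.
case: j => n; first by rewrite -exprnP lnXn // -mulr_natl.
rewrite NegzE -invr_expz -exprnP lnV ?posrE ?exprn_gt0 // lnXn //.
by rewrite intrN mulNr -mulr_natl.
Qed.

Lemma dexpz_le (x : R) (j : int) : 0 < x -> (delta ^ j <= x) = (dlevel x <= j).
Proof.
move=> x0; rewrite -ler_ln ?posrE ?exprz_gt0 // ln_dexpz.
by rewrite /dlevel real_ceil_le_int ?num_real // (ler_ndivrMr _ _ ln_delta_lt0).
Qed.

Lemma dexpz_gt (x : R) (j : int) : 0 < x -> (x < delta ^ j) = (j < dlevel x).
Proof. by move=> x0; rewrite ltNge dexpz_le // -ltNge. Qed.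

Lemma dlevel_dexpz (j : int) : dlevel (delta ^ j) = j.
Proof. by rewrite /dlevel ln_dexpz mulfK ?intrKceil // lt_eqF // ln_delta_lt0. Qed.

Lemma preIco_dexpz (X : Type) (f : X -> R) (a b : int) : (forall x, 0 < f x) ->
  preIco f (delta ^ a) (delta ^ b) = [set x | b < dlevel (f x) <= a].
Proof.
move=> fpos; apply/seteqP; split => x /=; rewrite /preIco /=.
  by move=> /andP[h1 h2]; rewrite -dexpz_le // -dexpz_gt // h1 h2.
by move=> /andP[h1 h2]; rewrite dexpz_le // dexpz_gt // h1 h2.
Qed.

Lemma ler_dexpz (a b : int) : (delta ^ a <= delta ^ b) = (b <= a).
Proof. by rewrite dexpz_le ?exprz_gt0 // dlevel_dexpz. Qed.

Lemma comparable_dlevel (x y : R) : 0 < x -> 0 < y ->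
  dlevel x <= dlevel y + 1 -> dlevel y <= dlevel x + 1 ->
  comparable_by (delta ^ 2) x y.
Proof.
move=> x0 y0 h1 h2; have dn0 : delta != 0 by rewrite gt_eqF.
have Hx1 : delta ^ dlevel x <= x by rewrite dexpz_le.
have Hx2 : x < delta ^ (dlevel x - 1) by rewrite dexpz_gt // ltrBlDr ltrDl.
have Hy1 : delta ^ dlevel y <= y by rewrite dexpz_le.
have Hy2 : y < delta ^ (dlevel y - 1) by rewrite dexpz_gt // ltrBlDr ltrDl.
apply/andP; split.
- rewrite ler_pdivlMr //; apply: le_trans Hx1.
  apply: le_trans (_ : delta ^ (dlevel y + 1) <= _); last by rewrite ler_dexpz.
  have -> : delta ^ (dlevel y + 1) = delta ^ 2 * delta ^ (dlevel y - 1).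
    by rewrite -expfzDr // addrCA addrC; congr (_ ^ _); rewrite addrC -addrA.
  by rewrite ler_pM2l ?ltW // exprz_gt0.
- rewrite ler_pdivrMr // invr_expz.
  apply: le_trans (ltW Hx2) _; apply: le_trans (_ : delta ^ (dlevel y - 2) <= _).
    by rewrite ler_dexpz; lia.
  have -> : delta ^ (dlevel y - 2) = delta ^ (-2) * delta ^ (dlevel y).
    by rewrite -expfzDr // addrC.
  by rewrite ler_pM2l // exprz_gt0.
Qed.


Lemma count_hyp_window (X Y : Type) (f : X -> R) (g : Y -> R) (L0 : int) (n0 : nat) :
  (forall x, 0 < f x) -> (forall y, 0 < g y) ->
  (forall x, L0 <= dlevel (f x)) -> (forall y, L0 <= dlevel (g y)) ->
  (forall (k : int) (l : nat), L0 + n0%:Z - 1 <= k -> (1 <= l)%N ->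
     preIco f (delta ^ (k + l%:Z)) (delta ^ k) #<=
     preIco g (delta ^ (k + l%:Z + 1)) (delta ^ (k - 1))) ->
  forall a b : nat,
   [set x | (n0 <= `|dlevel (f x) - L0|%N)%N /\ (a <= `|dlevel (f x) - L0|%N <= b)%N] #<=
   [set y | (a.-1 <= `|dlevel (g y) - L0|%N <= b.+1)%N].
Proof.
move=> fpos gpos fL gL hyp a b.
have [ab|ba] := leqP (maxn a n0) b; last first.
  apply: card_le_trans (subset_card_le (_ : _ `<=` set0)) (card_ge0 _ _).
  by move=> x [h1 h2] /=; have := fL x; lia.
have := hyp (L0 + (maxn a n0)%:Z - 1) (b - maxn a n0).+1 ltac:(lia) isT.
rewrite !preIco_dexpz // => H.
apply: card_le_trans (card_le_trans (subset_card_le _) H) (subset_card_le _).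
  by move=> x [h1 h2] /=; have := fL x; lia.
by move=> y /= h; have := gL y; lia.
Qed.

Lemma no_dlevel_above (X Y : Type) (f : X -> R) (B : int -> set Y) (k0 : int) :
  (forall x, 0 < f x) -> ~ inhabited Y ->
  (forall k, k0 <= k -> preIco f (delta ^ (k + 1%:Z)) (delta ^ k) #<= B k) ->
  forall x, ~ (k0 + 1 <= dlevel (f x)).
Proof.
move=> fpos nY hyp x hx; pose k := dlevel (f x) - 1.
have : preIco f (delta ^ (k + 1%:Z)) (delta ^ k) x.
  by rewrite preIco_dexpz //= /k; apply/andP; split; lia.
have Bk : B k = set0 by apply/seteqP; split => y // _; exact: nY.
have /card_le0P-> // : preIco f (delta ^ (k + 1%:Z)) (delta ^ k) #<= @set0 Y.
by rewrite -Bk; apply: hyp; rewrite /k; lia.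
Qed.

End Levels.

Local Open Scope ring_scope.

Section Lemma3p1.
Variables (R : realType) (T S : Type) (N : nat) (delta M : R)
  (tau : T -> R) (sigma : S -> R).
Hypotheses (d0 : 0 < delta) (d1 : delta < 1) (M1 : 1 <= M)
  (htau : forall t, 0 < tau t <= M) (hsigma : forall s, 0 < sigma s <= M).

Let hyp_from (k0 : int) := forall (k : int) (l : nat), k0 <= k -> (1 <= l)%N ->
  count_hyp delta tau sigma k l.

Let tau_gt0 t : 0 < tau t. Proof. by case/andP: (htau t). Qed.
Let sigma_gt0 s : 0 < sigma s. Proof. by case/andP: (hsigma s). Qed.

(* Levels are counted from [L0 := dlevel M <= 0], the level of the largest
   possible value, so that they become natural numbers. *)
Let L0 := dlevel delta M.
Let nl x := `|dlevel delta x - L0|%N.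

Let L0_le x : 0 < x -> x <= M -> L0 <= dlevel delta x.
Proof.
move=> x0 xM; rewrite /L0 -dexpz_le //; last exact: lt_le_trans x0 xM.
by apply: le_trans xM; rewrite dexpz_le.
Qed.

Let L0_le0 : L0 <= 0.
Proof. by rewrite /L0 -dexpz_le ?expr0z //; exact: lt_le_trans M1. Qed.

Let tau_L0 t : L0 <= dlevel delta (tau t).
Proof. by case/andP: (htau t); exact: L0_le. Qed.
Let sigma_L0 s : L0 <= dlevel delta (sigma s).
Proof. by case/andP: (hsigma s); exact: L0_le. Qed.

Let cst := delta ^ 2 * (delta ^+ N / M).

Let cst_gt0 : 0 < cst.
Proof. by rewrite mulr_gt0 ?exprz_gt0 // divr_gt0 ?exprn_gt0 //; exact: lt_le_trans M1. Qed.

Let comparable_close x y : 0 < x <= M -> 0 < y <= M ->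
  (nl x <= (nl y).+1)%N -> (nl y <= (nl x).+1)%N -> comparable_by cst x y.
Proof.
move=> /andP[x0 xM] /andP[y0 yM] h1 h2.
have Lx := L0_le x0 xM; have Ly := L0_le y0 yM; rewrite /nl in h1 h2.
apply: (comparable_by_le cst_gt0 _ (comparable_dlevel d0 d1 x0 y0 _ _)); [|lia|lia].
have M0 : 0 < M by exact: lt_le_trans M1.
apply: ler_piMr; first exact/ltW/exprz_gt0.
by rewrite ler_pdivrMr // mul1r; apply: le_trans M1; rewrite exprn_ile1 // ltW.
Qed.

Let comparable_big x y : delta ^+ N <= x <= M -> delta ^+ N <= y <= M ->
  comparable_by cst x y.
Proof.
move=> hx hy; apply: (comparable_by_le cst_gt0 _ (comparable_by_range _ hx hy)).
  apply: ler_piMl; last by rewrite -exprnP exprn_ile1 // ltW.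
  by apply/ltW/divr_gt0; [exact: exprn_gt0|exact: lt_le_trans M1].
by rewrite exprn_gt0.
Qed.

(* Below the threshold [nN] the level is at most [N], so the value lies in
   [delta ^+ N, M]. *)
Let nN := `|(N%:Z + 1 - L0)%R|%N.

Let big_of x : 0 < x -> x <= M -> ~ (nN <= nl x)%N -> delta ^+ N <= x <= M.
Proof.
move=> x0 xM h; rewrite xM andbT exprnP dexpz_le //.
by have := L0_le x0 xM; move: h; rewrite /nN /nl; have := L0_le0; lia.
Qed.

Let big_tau t : ~ (nN <= nl (tau t))%N -> delta ^+ N <= tau t <= M.
Proof. by case/andP: (htau t); exact: big_of. Qed.
Let big_sigma s : ~ (nN <= nl (sigma s))%N -> delta ^+ N <= sigma s <= M.
Proof. by case/andP: (hsigma s); exact: big_of. Qed.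

Let one_big : delta ^+ N <= 1 <= M.
Proof. by rewrite M1 andbT exprn_ile1 // ltW. Qed.

Let matching_from (n0 : nat) : hyp_from (L0 + n0%:Z - 1) -> T -> S ->
  exists (DT : set T) (DS : set S) (mm : T -> S) (mm' : S -> T),
   [/\ forall t, DT t -> mm' (mm t) = t /\ DS (mm t),
       forall s, DS s -> mm (mm' s) = s /\ DT (mm' s),
       forall t, (n0 <= nl (tau t))%N -> DT t,
       forall s, (n0 <= nl (sigma s))%N -> DS s &
       forall t, DT t -> comparable_by cst (tau t) (sigma (mm t))].
Proof.
move=> H t0 s0.
have HT := count_hyp_window d0 d1 tau_gt0 sigma_gt0 tau_L0 sigma_L0
  (fun k l hk hl => (H k l hk hl).1).
have HS := count_hyp_window d0 d1 sigma_gt0 tau_gt0 sigma_L0 tau_L0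
  (fun k l hk hl => (H k l hk hl).2).
have [f [f_inj f_lev]] := level_injection s0 HT.
have [g [g_inj g_lev]] := level_injection t0 HS.
exists (sb_domT [set t | (n0 <= nl (tau t))%N] [set s | (n0 <= nl (sigma s))%N] f g).
exists (sb_domS [set t | (n0 <= nl (tau t))%N] [set s | (n0 <= nl (sigma s))%N] f g).
exists (sb_fun s0 [set t | (n0 <= nl (tau t))%N] [set s | (n0 <= nl (sigma s))%N] f g).
exists (sb_inv t0 [set t | (n0 <= nl (tau t))%N] [set s | (n0 <= nl (sigma s))%N] f g).
split.
- by move=> t Dt; exact (sb_funK t0 s0 f_inj g_inj Dt).
- by move=> s Ds; exact (sb_invK t0 s0 f_inj g_inj Ds).
- by move=> t h; apply: sb_domT_sub.
- by move=> s h; right.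
move=> t Dt; have [[At ->]|[Bs e]] := sb_fun_edge s0 g_inj Dt.
  by have [h1 h2] := f_lev t At; apply: comparable_close.
by have [h1 h2] := g_lev _ Bs; rewrite e in h1 h2; apply: comparable_close.
Qed.

Let no_tau_above k0 : hyp_from k0 -> ~ inhabited S ->
  forall t, ~ (k0 + 1 <= dlevel delta (tau t)).
Proof.
move=> H nS; apply: (no_dlevel_above d0 d1 tau_gt0 nS) => k hk.
exact: (H k 1%N hk isT).1.
Qed.

Let no_sigma_above k0 : hyp_from k0 -> ~ inhabited T ->
  forall s, ~ (k0 + 1 <= dlevel delta (sigma s)).
Proof.
move=> H nT; apply: (no_dlevel_above d0 d1 sigma_gt0 nT) => k hk.
exact: (H k 1%N hk isT).2.
Qed.

Let high_level x : 0 < x <= M -> (nN <= nl x)%N -> N%:Z + 1 <= dlevel delta x.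
Proof. by move=> /andP[x0 xM]; have := L0_le x0 xM; rewrite /nN /nl; have := L0_le0; lia. Qed.

Let part1_empty_T : hyp_from N%:Z -> ~ inhabited T ->
  exists (I : Type) (eta : T + I -> S), bijective eta /\
    forall t, comparable_by cst (ext1 tau t) (sigma (eta t)).
Proof.
move=> H nT; exists S.
exists (fun x => match x with inl t => False_rect _ (nT (inhabits t)) | inr s => s end).
split; first by exists inr => [[t|s]|s] //; case: (nT (inhabits t)).
case=> [t|s]; first by case: (nT (inhabits t)).
apply: comparable_big => //; apply: big_sigma => /(high_level (hsigma s)).
exact: no_sigma_above H nT s.
Qed.

Let part1_empty_S : hyp_from N%:Z -> ~ inhabited S ->
  exists (I : Type) (eta : T -> S + I), bijective eta /\
    forall t, comparable_by cst (tau t) (ext1 sigma (eta t)).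
Proof.
move=> H nS; exists T, inr; split.
  exists (fun x => match x with inl s => False_rect _ (nS (inhabits s)) | inr t => t end).
    by [].
  by case=> [s|t] //; case: (nS (inhabits s)).
move=> t; apply: comparable_big => //; apply: big_tau => /(high_level (htau t)).
exact: no_tau_above H nS t.
Qed.

Lemma lemma3p1_part1 :
  (forall (k : int) (l : nat), N%:Z <= k -> (1 <= l)%N -> count_hyp delta tau sigma k l) ->
  exists2 d' : R, 0 < d' &
    [\/ exists eta : T -> S, bijective eta /\
           forall t, comparable_by d' (tau t) (sigma (eta t)),
        exists (I : Type) (eta : T + I -> S), bijective eta /\
           forall t, comparable_by d' (ext1 tau t) (sigma (eta t))
      | exists (I : Type) (eta : T -> S + I), bijective eta /\
           forall t, comparable_by d' (tau t) (ext1 sigma (eta t))].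
Proof.
move=> H; exists cst => //.
have [[t0]|nT] := pselect (inhabited T); last by apply: Or32; exact: part1_empty_T.
have [[s0]|nS] := pselect (inhabited S); last by apply: Or33; exact: part1_empty_S.
have H' : hyp_from (L0 + nN%:Z - 1) by move=> k l hk; apply: H; rewrite /nN; have := L0_le0; lia.
have [DT [DS [mm [mm' [mmK mm'K DT_high DS_high mm_close]]]]] := matching_from H' t0 s0.
have big_t t : ~ DT t -> delta ^+ N <= tau t <= M by move=> nD; apply: big_tau => /DT_high.
have big_s s : ~ DS s -> delta ^+ N <= sigma s <= M by move=> nD; apply: big_sigma => /DS_high.
have [[I [eta [eta_bij [eta_inl eta_inr]]]]|[I [eta [eta_bij eta_t]]]] :=
  extend_partial_bijection t0 s0 mmK mm'K.
  apply: Or32; exists I, eta; split => // -[t|i] /=; last first.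
    exact: comparable_big one_big (big_s _ (eta_inr i)).
  case: (eta_inl t) => [[Dt ->]|[nDt nDs]]; first exact: mm_close.
  exact: comparable_big (big_t _ nDt) (big_s _ nDs).
apply: Or33; exists I, eta; split => // t; move: (eta_t t); case: (eta t) => [s|i] /=.
  case=> [[Dt ->]|[nDt nDs]]; first exact: mm_close.
  exact: comparable_big (big_t _ nDt) (big_s _ nDs).
by move=> nDt; exact: comparable_big (big_t _ nDt) one_big.
Qed.

Lemma lemma3p1_part2 : (forall (k : int) (l : nat), (1 <= l)%N -> count_hyp delta tau sigma k l) ->
  exists2 d' : R, 0 < d' &
    exists eta : T -> S, bijective eta /\
      forall t, comparable_by d' (tau t) (sigma (eta t)).
Proof.
move=> H; exists cst => //.
have H' : hyp_from (L0 - 1) by move=> k l _; exact: H.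
have [[t0]|nT] := pselect (inhabited T); last first.
  have [[s0]|nS] := pselect (inhabited S).
    by exfalso; apply: (no_sigma_above H' nT (s := s0)); rewrite subrK.
  exists (fun t => False_rect _ (nT (inhabits t))); split => [|t]; last by case: (nT (inhabits t)).
  exists (fun s => False_rect _ (nS (inhabits s))) => [t|s].
    by case: (nT (inhabits t)).
  by case: (nS (inhabits s)).
have [[s0]|nS] := pselect (inhabited S); last first.
  by exfalso; apply: (no_tau_above H' nS (t := t0)); rewrite subrK.
have [|DT [DS [mm [mm' [mmK mm'K DT_all DS_all mm_close]]]]] := matching_from (n0 := 0) _ t0 s0.
  by rewrite addr0.
exists mm; split; last by move=> t; exact: mm_close (DT_all _ _).
by exists mm' => [t|s]; [exact: (mmK _ (DT_all _ _)).1|exact: (mm'K _ (DS_all _ _)).1].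
Qed.

End Lemma3p1.

Theorem lemma3p1 (R : realType) (T S : Type) (N : nat) (delta M : R)
    (tau : T -> R) (sigma : S -> R) :
  (1 <= N)%N -> 0 < delta -> delta < 1 -> 1 <= M ->
  (forall t, 0 < tau t <= M) -> (forall s, 0 < sigma s <= M) ->
  ((forall (k : int) (l : nat), N%:Z <= k -> (1 <= l)%N ->
       count_hyp delta tau sigma k l) ->
   exists2 d' : R, 0 < d' &
     [\/ exists eta : T -> S, bijective eta /\
            forall t, comparable_by d' (tau t) (sigma (eta t)),
         exists (I : Type) (eta : T + I -> S), bijective eta /\
            forall t, comparable_by d' (ext1 tau t) (sigma (eta t))
       | exists (I : Type) (eta : T -> S + I), bijective eta /\
            forall t, comparable_by d' (tau t) (ext1 sigma (eta t))])
  /\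
  ((forall (k : int) (l : nat), (1 <= l)%N -> count_hyp delta tau sigma k l) ->
   exists2 d' : R, 0 < d' &
     exists eta : T -> S, bijective eta /\
       forall t, comparable_by d' (tau t) (sigma (eta t))).
Proof.
move=> _ d0 d1 M1 htau hsigma; split.
- exact: (lemma3p1_part1 d0 d1 M1 htau hsigma).
- exact: (lemma3p1_part2 N d0 d1 M1 htau hsigma).
Qed.
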